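(* Let $0<A<B$ and $h(t)=t\left(\frac{3-t}{2}\right)^2$. For $x>B/3$ define $$\rho(x)=\frac{\min\{h(t):t\in[A/x,B/x]\}}{\max\{h(t):t\in[A/x,B/x]\}} .$$ Then $\rho$ attains its maximum over $x\in(B/3,\infty)$ at $x=\frac13\left(A+\sqrt{AB}+B\right)$.
   Context: Interpretation: if a Gabor frame operator $S$ has spectrum $[A,B]$ and is rescaled to $S/x$, one step of the iteration $\gamma\mapsto\frac32\gamma-\frac12S_\gamma\gamma$ (with $S_\gamma$ the frame operator of $(\gamma,a,b)$) maps the spectrum via $h$, and $\rho(x)$ is the resulting ratio of smallest to largest frame bound. *)

From HB Require Import structures.
From mathcomp Require Import all_boot all_order all_algebra.
From mathcomp Require Import all_classical all_reals.
Set Implicit Arguments. Unset Strict Implicit. Unset Printing Implicit Defensive.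
Import Order.TTheory GRing.Theory Num.Theory.
Local Open Scope classical_set_scope.
Local Open Scope ring_scope.

Definition h {R : realType} (t : R) : R := t * ((3 - t) / 2) ^+ 2.

Definition hImage {R : realType} (A B x : R) : set R :=
  h @` [set t : R | A / x <= t <= B / x].

(* rho(x) = min of h on [A/x,B/x] / max of h on [A/x,B/x];
   h is continuous on a compact interval, so min = inf and max = sup. *)
Definition rho {R : realType} (A B x : R) : R :=
  inf (hImage A B x) / sup (hImage A B x).

(* At x0 = (A + sqrt(AB) + B)/3 the endpoints a0 = A/x0 < 1 < b0 = B/x0 of the
   interval satisfy h a0 = h b0: x0 is the larger root of
   9x^2 - 6(A + B)x + A^2 + AB + B^2, which is x^3 (h(B/x) - h(A/x)) up to a
   positive factor.  Since h increases on [0,1], decreases on [1,3] and peaks at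
   h 1 = 1, this gives rho(x0) = h a0.  For any other x the interval [A/x, B/x]
   either still contains 1, and then one endpoint has moved past a0 or b0, or it
   lies on one side of 1, and then rho(x) <= h(r) for the endpoint ratio
   r = B/A or A/B, by the inequality h(r t) <= h(r) h(t) for (r-1)(t-1) >= 0. *)
From HB Require Import structures.
From mathcomp Require Import all_boot all_order all_algebra.
From mathcomp Require Import all_classical all_reals.
From mathcomp Require Import ring lra.
Import Order.TTheory GRing.Theory Num.Theory.
Local Open Scope classical_set_scope.
Local Open Scope ring_scope.

Section ShapeOfH.
Variable R : realType.
Implicit Types r s t : R.

Lemma h_sub s t : h t - h s = (t - s) * (9 - 6 * (t + s) + t ^+ 2 + t * s + s ^+ 2) / 4.
Proof. by rewrite /h; field; rewrite ?pnatr_eq0. Qed.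

Lemma h1 : h 1 = 1 :> R.
Proof. by rewrite /h; field; rewrite ?pnatr_eq0. Qed.

Lemma h_ge0 t : 0 <= t -> 0 <= h t.
Proof. by move=> t_ge0; rewrite /h mulr_ge0 // sqr_ge0. Qed.

Lemma h_gt0 t : 0 < t -> t < 3 -> 0 < h t.
Proof. by move=> t_gt0 t_lt3; rewrite /h mulr_gt0 // exprn_gt0 //; lra. Qed.

Lemma h_le1 t : t <= 4 -> h t <= 1.
Proof.
move=> t_le4; rewrite -subr_ge0.
have -> : 1 - h t = (t - 1) ^+ 2 * (4 - t) / 4.
  by rewrite /h; field; rewrite ?pnatr_eq0.
by rewrite divr_ge0 // mulr_ge0 ?sqr_ge0 //; lra.
Qed.

Lemma h_homo_le01 s t : 0 <= s -> s <= t -> t <= 1 -> h s <= h t.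
Proof.
move=> s_ge0 st t_le1; rewrite -subr_ge0 h_sub divr_ge0 // mulr_ge0 //; first lra.
have : 0 <= (1 - t) * (1 - s) by apply: mulr_ge0; lra.
have := sqr_ge0 (t - 1); have := sqr_ge0 (s - 1); nra.
Qed.

Lemma h_nhomo_le13 s t : 1 <= s -> s <= t -> t <= 3 -> h t <= h s.
Proof.
move=> s_ge1 st t_le3; rewrite -subr_ge0.
have -> : h s - h t = (t - s) * - (9 - 6 * (t + s) + t ^+ 2 + t * s + s ^+ 2) / 4.
  by rewrite /h; field; rewrite ?pnatr_eq0.
rewrite divr_ge0 // mulr_ge0 //; first lra.
(* with u = 3 - t, v = 3 - s in [0,2] the cofactor is 3u + 3v - u^2 - uv - v^2 *)
have : (3 - t) ^+ 2 <= 2 * (3 - t) by rewrite expr2 ler_wpM2r //; lra.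
have : (3 - s) ^+ 2 <= 2 * (3 - s) by rewrite expr2 ler_wpM2r //; lra.
have := sqr_ge0 (t - s); nra.
Qed.

Lemma h_mul_le r t : 0 <= r -> 0 <= t -> r <= 3 -> t <= 3 -> r * t <= 3 ->
  0 <= (r - 1) * (t - 1) -> h (r * t) <= h r * h t.
Proof.
move=> r_ge0 t_ge0 r_le3 t_le3 rt_le3 rt_side; rewrite -subr_ge0.
have -> : h r * h t - h (r * t) =
    r * t / 16 * (3 * ((r - 1) * (t - 1))) * ((3 - r) * (3 - t) + 2 * (3 - r * t)).
  by rewrite /h; field; rewrite ?pnatr_eq0.
apply: mulr_ge0; last by rewrite addr_ge0 ?mulr_ge0 //; lra.
apply: mulr_ge0; last lra.
by rewrite divr_ge0 // mulr_ge0.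
Qed.

End ShapeOfH.

Section RatioOnInterval.
Set Implicit Arguments.
Unset Strict Implicit.
Variable R : realType.
Implicit Types a b t u : R.

Definition h_range a b : set R := h @` [set t : R | a <= t <= b].

Definition h_ratio a b : R := inf (h_range a b) / sup (h_range a b).

Lemma rho_h_ratio A B x : rho A B x = h_ratio (A / x) (B / x).
Proof. by []. Qed.

Lemma h_range_lbound a b : 0 <= a -> lbound (h_range a b) 0.
Proof. by move=> a_ge0 _ [t /andP[a_le_t t_le_b] <-]; apply: h_ge0; lra. Qed.

Lemma h_range_ubound a b : b <= 3 -> ubound (h_range a b) 1.
Proof. by move=> b_le3 _ [t /andP[a_le_t t_le_b] <-]; apply: h_le1; lra. Qed.

Lemma h_range_inf_le a b t : 0 <= a -> a <= t <= b -> inf (h_range a b) <= h t.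
Proof. by move=> a_ge0 tab; apply: ge_inf; [exists 0; apply: h_range_lbound|exists t]. Qed.

Lemma h_range_sup_ge a b t : b <= 3 -> a <= t <= b -> h t <= sup (h_range a b).
Proof.
by move=> b_le3 tab; apply: ub_le_sup; [exists 1; apply: h_range_ubound|exists t].
Qed.

Lemma h_ratio_le_div a b t u : 0 <= a -> b <= 3 -> a <= t <= b -> a <= u <= b ->
  0 < h u -> h_ratio a b <= h t / h u.
Proof.
move=> a_ge0 b_le3 tab uab hu_gt0.
have inf_le := h_range_inf_le a_ge0 tab.
have sup_ge := h_range_sup_ge b_le3 uab.
have inf_ge0 : 0 <= inf (h_range a b).
  apply: lb_le_inf; last exact: h_range_lbound.
  by exists (h t), t.
have sup_gt0 : 0 < sup (h_range a b) by apply: lt_le_trans sup_ge.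
rewrite /h_ratio ler_pdivrMr // mulrAC ler_pdivlMr //.
exact: ler_pM inf_ge0 (ltW hu_gt0) inf_le sup_ge.
Qed.

Lemma h_ratio_le_mem1 a b t : 0 <= a -> a <= 1 <= b -> b <= 3 -> a <= t <= b ->
  h_ratio a b <= h t.
Proof.
move=> a_ge0 ab1 b_le3 tab.
by rewrite -[h t]divr1 -[X in _ / X]h1 h_ratio_le_div // h1.
Qed.

Lemma h_ratio_le_ge1 a b : 1 <= a -> a <= b -> b < 3 -> h_ratio a b <= h (b / a).
Proof.
move=> a_ge1 ab b_lt3.
have a_gt0 : 0 < a by lra.
have ha_gt0 : 0 < h a by apply: h_gt0; lra.
have a_mem : a <= a <= b by rewrite lexx ab.
have b_mem : a <= b <= b by rewrite ab lexx.
apply: le_trans (h_ratio_le_div _ _ b_mem a_mem ha_gt0) _; [lra|lra|].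
have ba_le3 : b / a <= 3 by rewrite ler_pdivrMr //; lra.
have ba_ge1 : 1 <= b / a by rewrite ler_pdivlMr //; lra.
have same_side : 0 <= (b / a - 1) * (a - 1) by rewrite mulr_ge0 //; lra.
have ba_ge0 : 0 <= b / a by lra.
by rewrite ler_pdivrMr // -{1}(divfK (lt0r_neq0 a_gt0) b) h_mul_le ?divfK ?lt0r_neq0 //; lra.
Qed.

Lemma h_ratio_le_le1 a b : 0 < a -> a <= b -> b <= 1 -> h_ratio a b <= h (a / b).
Proof.
move=> a_gt0 ab b_le1.
have b_gt0 : 0 < b by lra.
have hb_gt0 : 0 < h b by apply: h_gt0; lra.
have a_mem : a <= a <= b by rewrite lexx ab.
have b_mem : a <= b <= b by rewrite ab lexx.
apply: le_trans (h_ratio_le_div _ _ a_mem b_mem hb_gt0) _; [lra|lra|].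
have ab_le1 : a / b <= 1 by rewrite ler_pdivrMr //; lra.
have ab_ge0 : 0 <= a / b by rewrite divr_ge0 //; lra.
have same_side : 0 <= (a / b - 1) * (b - 1) by rewrite mulr_le0 //; lra.
by rewrite ler_pdivrMr // -{1}(divfK (lt0r_neq0 b_gt0) a) h_mul_le ?divfK ?lt0r_neq0 //; lra.
Qed.

Lemma h_ratio_balanced a b : 0 <= a -> a <= 1 <= b -> b <= 3 -> h a = h b ->
  h_ratio a b = h a.
Proof.
move=> a_ge0 ab1 b_le3 hab.
have a_mem : a <= a <= b by apply/andP; split; lra.
have inf_eq : inf (h_range a b) = h a.
  apply/eqP; rewrite eq_le h_range_inf_le //=.
  apply: lb_le_inf; first by exists (h a), a.
  move=> _ [t /andP[a_le_t t_le_b] <-].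
  have [t_le1|t_gt1] := leP t 1; first by apply: h_homo_le01; lra.
  by rewrite hab; apply: h_nhomo_le13; lra.
have sup_eq : sup (h_range a b) = 1.
  apply/eqP; rewrite eq_le; apply/andP; split.
    by apply: ge_sup; [exists (h a), a|exact: h_range_ubound].
  by rewrite -[X in X <= _]h1 h_range_sup_ge.
by rewrite /h_ratio inf_eq sup_eq divr1.
Qed.

Lemma h_ratio_le_balanced a b a0 b0 : 0 <= a -> a <= 1 <= b -> b <= 3 ->
  a0 <= 1 <= b0 -> h a0 = h b0 -> a <= a0 \/ b0 <= b -> h_ratio a b <= h a0.
Proof.
move=> a_ge0 ab1 b_le3 /andP[a0_le1 b0_ge1] hab0 [a_le_a0|b0_le_b].
  apply: le_trans (h_ratio_le_mem1 a_ge0 ab1 b_le3 (t := a) _) _; first lra.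
  by apply: h_homo_le01.
apply: le_trans (h_ratio_le_mem1 a_ge0 ab1 b_le3 (t := b) _) _; first lra.
by rewrite hab0; apply: h_nhomo_le13.
Qed.

End RatioOnInterval.

Lemma sqrt_mul_between (R : rcfType) (a b : R) : 0 < a -> a < b ->
  a < Num.sqrt (a * b) < b.
Proof.
move=> a_gt0 ab; have b_gt0 : 0 < b by apply: lt_trans ab.
rewrite -{1}(ger0_norm (ltW a_gt0)) -{3}(ger0_norm (ltW b_gt0)) -!sqrtr_sqr.
by rewrite !ltr_sqrt ?exprn_gt0 ?mulr_gt0 // !expr2 ltr_pM2l // ltr_pM2r // ab.
Qed.

Section BalancedScale.
Set Implicit Arguments.
Unset Strict Implicit.
Variable R : realType.
Implicit Types A B x : R.

Definition balanced_scale A B : R := (A + Num.sqrt (A * B) + B) / 3.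

Lemma balanced_scale_bounds A B : 0 < A -> A < B ->
  B / 3 < balanced_scale A B /\ A < balanced_scale A B < B.
Proof.
move=> A_gt0 A_lt_B.
have /andP[A_lt_s s_lt_B] : A < Num.sqrt (A * B) < B by exact: sqrt_mul_between.
by split; [|apply/andP; split]; rewrite /balanced_scale; lra.
Qed.

Lemma h_balanced_scale A B : 0 <= A * B -> balanced_scale A B != 0 ->
  h (A / balanced_scale A B) = h (B / balanced_scale A B).
Proof.
move=> AB_ge0 x0_neq0; set x0 := balanced_scale A B.
apply/eqP; rewrite eq_sym -subr_eq0 h_sub.
have -> : 9 - 6 * (B / x0 + A / x0) + (B / x0) ^+ 2 + B / x0 * (A / x0) + (A / x0) ^+ 2
    = (9 * x0 ^+ 2 - 6 * (A + B) * x0 + A ^+ 2 + A * B + B ^+ 2) / x0 ^+ 2.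
  by field.
have -> : 9 * x0 ^+ 2 - 6 * (A + B) * x0 + A ^+ 2 + A * B + B ^+ 2
    = Num.sqrt (A * B) ^+ 2 - A * B.
  by rewrite /x0 /balanced_scale; field; rewrite ?pnatr_eq0.
by rewrite sqr_sqrtr // subrr mul0r mulr0 mul0r.
Qed.

Lemma balanced_scale_endpoints A B : 0 < A -> A < B ->
  0 < A / balanced_scale A B < 1 /\ 1 < B / balanced_scale A B < 3.
Proof.
move=> A_gt0 A_lt_B; have [B3x0 /andP[Ax0 x0B]] := balanced_scale_bounds A_gt0 A_lt_B.
have x0_gt0 : 0 < balanced_scale A B by lra.
rewrite divr_gt0 // ltr_pdivrMr // ltr_pdivlMr // ltr_pdivrMr //.
by rewrite !mul1r Ax0 x0B; lra.
Qed.

Lemma rho_balanced_scale A B : 0 < A -> A < B ->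
  rho A B (balanced_scale A B) = h (A / balanced_scale A B).
Proof.
move=> A_gt0 A_lt_B; have [_ /andP[Ax0 _]] := balanced_scale_bounds A_gt0 A_lt_B.
have [/andP[a0_gt0 a0_lt1] /andP[b0_gt1 b0_lt3]] := balanced_scale_endpoints A_gt0 A_lt_B.
have AB_ge0 : 0 <= A * B by rewrite mulr_ge0 //; lra.
have x0_neq0 : balanced_scale A B != 0 by rewrite gt_eqF //; lra.
by rewrite rho_h_ratio h_ratio_balanced ?(h_balanced_scale AB_ge0 x0_neq0) ?ltW.
Qed.

Lemma rho_le_balanced_scale A B x : 0 < A -> A < B -> B / 3 < x ->
  rho A B x <= h (A / balanced_scale A B).
Proof.
move=> A_gt0 A_lt_B B3x.
have [B3x0 /andP[Ax0 x0B]] := balanced_scale_bounds A_gt0 A_lt_B.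
have [/andP[a0_gt0 a0_lt1] /andP[b0_gt1 b0_lt3]] := balanced_scale_endpoints A_gt0 A_lt_B.
have AB_ge0 : 0 <= A * B by rewrite mulr_ge0 //; lra.
have x0_neq0 : balanced_scale A B != 0 by rewrite gt_eqF //; lra.
have h_bal := h_balanced_scale AB_ge0 x0_neq0.
rewrite rho_h_ratio.
set x0 := balanced_scale A B in B3x0 Ax0 x0B a0_gt0 a0_lt1 b0_gt1 b0_lt3 h_bal *.
have x_gt0 : 0 < x by lra.
have x0_gt0 : 0 < x0 by lra.
have a_x : A / x * x = A by rewrite divfK ?lt0r_neq0.
have b_x : B / x * x = B by rewrite divfK ?lt0r_neq0.
have b_lt3 : B / x < 3 by nra.
have [x_lt_A|A_le_x] := ltP x A.
  apply: le_trans (h_ratio_le_ge1 _ _ b_lt3) _; [nra|nra|].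
  rewrite h_bal; have -> : B / x / (A / x) = B / A by field; rewrite !lt0r_neq0.
  apply: h_nhomo_le13; first lra.
    by rewrite ler_pM2l ?lef_pV2 ?posrE ?ltW //; lra.
  by rewrite ler_pdivrMr //; lra.
have [B_lt_x|x_le_B] := ltP B x.
  apply: le_trans (h_ratio_le_le1 _ _ _) _; [nra|nra|nra|].
  have -> : A / x / (B / x) = A / B by field; rewrite !lt0r_neq0 //; lra.
  apply: h_homo_le01; [|by rewrite ler_pM2l ?lef_pV2 ?posrE ?ltW //; lra|lra].
  by rewrite divr_ge0 //; lra.
apply: h_ratio_le_balanced h_bal _.
- by rewrite divr_ge0 ?ltW.
- by apply/andP; split; nra.
- exact: ltW.
- by rewrite (ltW a0_lt1) ltW.
- have [x0_le_x|x_lt_x0] := leP x0 x; [left|right];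
    by rewrite ler_pM2l ?lef_pV2 ?posrE //; lra.
Qed.

End BalancedScale.

Theorem mainTheorem10 (R : realType) (A B : R) (hA : 0 < A) (hAB : A < B) :
  let x0 := (A + Num.sqrt (A * B) + B) / 3 in
  B / 3 < x0 /\ (forall x : R, B / 3 < x -> rho A B x <= rho A B x0).
Proof.
rewrite -/(balanced_scale A B).
have [B3x0 _] := balanced_scale_bounds hA hAB.
split=> // x B3x.
by rewrite (rho_balanced_scale hA hAB) rho_le_balanced_scale.
Qed.
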